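(* Let $d\ge2$ and $\Phi_t:\mathbb M_d\to\mathbb M_d$, $\Phi_t(X)=\mathrm{Tr}(X)I_d-tX$, $t\in\mathbb R$. For $\alpha\in[1,d]$ with $\alpha=k+\theta$, $k=\lfloor\alpha\rfloor$, $\theta\in[0,1)$, let $t^\ast_\alpha:=\frac{k+\theta^2}{(k+\theta)^2}$. Then: (i) if $t\le0$, $\Phi_t$ is completely positive and $\tau(\Phi_t)=d$; (ii) if $0<t\le\frac1d$, $\Phi_t$ is completely positive and $\tau(\Phi_t)=d$; (iii) if $\frac1d<t<1$, then $\tau(\Phi_t)$ is the unique $\alpha\in(1,d)$ with $t=t^\ast_\alpha$; more explicitly, if $t\in(\frac1{k+1},\frac1k]$ for some $k\in\{1,\dots,d-1\}$, then $\tau(\Phi_t)=k+\theta(t)$ where $\theta(t)\in[0,1)$ is the unique solution in $[0,1)$ of $(t-1)\theta^2+2tk\theta+(tk^2-k)=0$; equivalently, for $t\in(\frac1{k+1},\frac1k)$, $\theta(t)=\frac{tk-\sqrt{k(t(k+1)-1)}}{1-t}$; and at $t=\frac1k$, $\theta(t)=0$, so $\tau(\Phi_{1/k})=k$; (iv) $\tau(\Phi_1)=1$.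
   Context: The Choi matrix of a linear $\Phi:\mathbb M_d\to\mathbb M_d$ is $C_\Phi=\sum_{i,j}E_{ij}\otimes\Phi(E_{ij})$. Schmidt coefficients $s_1(\psi)\ge\dots\ge s_d(\psi)\ge0$ of $\psi=\sum a_{ij}e_i\otimes e_j$ are the singular values of $[a_{ij}]$. For $\alpha\in[1,d]$ with $k=\lfloor\alpha\rfloor$, $\theta=\alpha-k$, $r=\lceil\alpha\rceil$, a unit vector $\psi$ is $\alpha$-admissible if $s_j(\psi)=0$ for $j\ge r+1$ and, when $\theta>0$, $s_{k+1}(\psi)\le\frac\theta k\sum_{j=1}^ks_j(\psi)$; $\mathcal V_\alpha$ is the set of these. A Hermitian-preserving $\Phi$ is in $\mathsf P_\alpha$ if $\langle\psi,C_\Phi\psi\rangle\ge0$ for all $\psi\in\mathcal V_\alpha$. For a Hermitian-preserving $\Phi\in\mathsf P_1$, the stability index is $\tau(\Phi):=\sup\{\alpha\in[1,d]:\Phi\in\mathsf P_\alpha\}$. *)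

From HB Require Import structures.
From mathcomp Require Import all_boot all_order all_algebra.
From mathcomp Require Import complex.
From mathcomp Require Import classical_sets reals.

Set Implicit Arguments.
Unset Strict Implicit.
Unset Printing Implicit Defensive.

Import Order.TTheory GRing.Theory Num.Theory.
Local Open Scope ring_scope.
Local Open Scope classical_set_scope.
Local Open Scope sesquilinear_scope.

Section ChoiDefs.
Variable R : realType.
Local Notation C := R[i].
Variable d : nat.

Definition Emx (i j : 'I_d) : 'M[C]_d := delta_mx i j.

(* Choi matrix C_Phi = \sum_{i,j} E_ij (x) Phi(E_ij), indexed by pairs:
   C_Phi((i,k),(j,l)) = Phi(E_ij)_{k l}; vectors of C^d (x) C^d are
   functions psi : 'I_d * 'I_d -> C with psi (i,k) the coefficient of
   e_i (x) e_k. *)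
Definition choi (Phi : 'M[C]_d -> 'M[C]_d) (p q : 'I_d * 'I_d) : C :=
  Phi (Emx p.1 q.1) p.2 q.2.

Definition choi_form (Phi : 'M[C]_d -> 'M[C]_d) (psi : 'I_d * 'I_d -> C) : C :=
  \sum_p \sum_q (psi p)^* * choi Phi p q * psi q.

Definition unit_vector (psi : 'I_d * 'I_d -> C) : Prop :=
  \sum_p (psi p)^* * psi p = 1.

Definition coef_mx (psi : 'I_d * 'I_d -> C) : 'M[C]_d := \matrix_(i, j) psi (i, j).

(* s (0-based: s j = s_{j+1}) is the non-increasing list of singular values
   of A, i.e. the diagonal of a singular value decomposition A = U diag(s) V. *)
Definition singular_values (A : 'M[C]_d) (s : 'I_d -> R) : Prop :=
  (forall j, 0 <= s j) /\
  (forall i j : 'I_d, (i <= j)%N -> s j <= s i) /\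
  exists U V : 'M[C]_d,
    U \is unitarymx /\ V \is unitarymx /\
    A = U *m diag_mx (\row_j (s j)%:C%C) *m V.

Definition floor_nat (alpha : R) : nat := Num.truncn alpha.
Definition frac_part (alpha : R) : R := alpha - (floor_nat alpha)%:R.
Definition ceil_nat (alpha : R) : nat :=
  if 0 < frac_part alpha then (floor_nat alpha).+1 else floor_nat alpha.

Definition admissible (alpha : R) (psi : 'I_d * 'I_d -> C) : Prop :=
  let k := floor_nat alpha in
  let theta := frac_part alpha in
  let r := ceil_nat alpha in
  unit_vector psi /\
  exists s, singular_values (coef_mx psi) s /\
    (forall j : 'I_d, (r <= j)%N -> s j = 0) /\
    (0 < theta -> forall j : 'I_d, nat_of_ord j = k ->
        s j <= theta / k%:R * \sum_(i : 'I_d | (i < k)%N) s i).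

Definition hermitian_preserving (Phi : 'M[C]_d -> 'M[C]_d) : Prop :=
  forall X : 'M[C]_d, Phi (X ^t*) = (Phi X) ^t*.

Definition in_P (alpha : R) (Phi : 'M[C]_d -> 'M[C]_d) : Prop :=
  hermitian_preserving Phi /\
  forall psi, admissible alpha psi -> 0 <= choi_form Phi psi.

Definition tau (Phi : 'M[C]_d -> 'M[C]_d) : R :=
  sup [set alpha : R | 1 <= alpha <= d%:R /\ in_P alpha Phi].

Definition psd_block (n : nat) (X : 'I_n -> 'I_n -> 'M[C]_d) : Prop :=
  forall u : 'I_n -> 'cV[C]_d,
    0 <= \sum_p \sum_q ((u p) ^t* *m X p q *m u q) 0 0.

(* complete positivity: id_n (x) Phi is positive for every n *)
Definition completely_positive (Phi : 'M[C]_d -> 'M[C]_d) : Prop :=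
  forall (n : nat) (X : 'I_n -> 'I_n -> 'M[C]_d),
    psd_block X -> psd_block (fun p q => Phi (X p q)).

Definition Phi_t (t : R) (X : 'M[C]_d) : 'M[C]_d :=
  (\tr X) *: 1%:M - (t%:C)%C *: X.

End ChoiDefs.

Definition tstar (R : realType) (alpha : R) : R :=
  ((floor_nat alpha)%:R + frac_part alpha ^+ 2) /
  ((floor_nat alpha)%:R + frac_part alpha) ^+ 2.

From HB Require Import structures.
From mathcomp Require Import all_boot all_order all_algebra.
From mathcomp Require Import complex.
From mathcomp Require Import classical_sets reals.
From mathcomp Require Import lra ring zify.

(* Writing A for the coefficient matrix of a unit vector psi, one has
   <psi, C_{Phi_t} psi> = 1 - t |tr A|^2 and |tr A| <= s_1 + ... + s_d.
   If psi is alpha-admissible with alpha = k + theta, Cauchy-Schwarz on the k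
   leading Schmidt coefficients together with the bound on s_{k+1} gives
   (s_1 + ... + s_d)^2 <= 1 / t*_alpha, with equality for Schmidt coefficients
   proportional to (1, ..., 1, theta, 0, ..., 0).  Hence Phi_t lies in P_alpha
   iff t <= t*_alpha.  Since t*_alpha decreases strictly, from t*_1 = 1 down to
   t*_k = 1/k at the integers, tau(Phi_t) is d when t <= 1/d and otherwise the
   alpha with t*_alpha = t, whose fractional part is the root of the quadratic.
   Complete positivity for t <= 1/d is the inequality X <= d (id (x) Tr)(X) (x) I
   for positive block matrices X. *)

Set Implicit Arguments.
Unset Strict Implicit.
Unset Printing Implicit Defensive.

Import Order.TTheory GRing.Theory Num.Theory.
Local Open Scope ring_scope.
Local Open Scope sesquilinear_scope.
Local Notation "x %:C" := (x%:C)%C : ring_scope.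

Section Tstar.
Variable R : realType.
Implicit Types (a b t th ph : R) (k : nat).

Lemma floor_add_frac a : (floor_nat a)%:R + frac_part a = a.
Proof. by rewrite /frac_part addrC subrK. Qed.

Lemma frac_part_itv a : 0 <= a -> 0 <= frac_part a < 1.
Proof.
move=> a0; have /andP[lo hi] := truncn_itv a0.
rewrite -natr1 in hi; rewrite /frac_part /floor_nat; lra.
Qed.

Lemma floor_natD k th : 0 <= th < 1 -> floor_nat (k%:R + th) = k.
Proof.
move=> /andP[th0 th1]; rewrite /floor_nat truncnD ?natr_nat // natrK.
by rewrite (_ : Num.truncn th = 0%N) ?addn0 //; apply/truncn0Pn; rewrite -ltNge.
Qed.

Lemma frac_partD k th : 0 <= th < 1 -> frac_part (k%:R + th) = th.
Proof. by move=> h; rewrite /frac_part floor_natD // addrC addKr. Qed.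

Lemma floor_nat_ge1 a : 1 <= a -> (1 <= floor_nat a)%N.
Proof. by move=> a1; rewrite /floor_nat truncn_gt0. Qed.

Lemma floor_nat_le a k : a <= k%:R -> (floor_nat a <= k)%N.
Proof. by move=> ak; have := le_truncn ak; rewrite natrK. Qed.

Lemma tstarD k th : 0 <= th < 1 ->
  tstar (k%:R + th) = (k%:R + th ^+ 2) / (k%:R + th) ^+ 2.
Proof. by move=> h; rewrite /tstar floor_natD // frac_partD. Qed.

Lemma tstar_nat k : (1 <= k)%N -> tstar (k%:R : R) = 1 / k%:R.
Proof.
move=> k1; rewrite -[k%:R]addr0 tstarD ?lexx ?ltr01 // expr0n /= !addr0.
by field; rewrite pnatr_eq0 -lt0n.
Qed.

Lemma tstar1 : tstar (1 : R) = 1.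
Proof. by have := @tstar_nat 1 isT; rewrite divr1. Qed.

Section Block.
Variables (k : nat) (th : R).
Hypotheses (k1 : (1 <= k)%N) (thP : 0 <= th < 1).

Lemma tstarD_gt : 1 / k.+1%:R < tstar (k%:R + th).
Proof.
have kR : 1 <= k%:R :> R by rewrite ler1n.
case/andP: (thP) => th0 th1.
rewrite tstarD // ltr_pdivrMr ?ltr0n // mulrAC ltr_pdivlMr; last first.
  by apply: exprn_gt0; lra.
rewrite mul1r -natr1 -subr_gt0.
have -> : (k%:R + th ^+ 2) * (k%:R + 1) - (k%:R + th) ^+ 2 = k%:R * (1 - th) ^+ 2.
  by ring.
by apply: mulr_gt0; [lra | apply: exprn_gt0; lra].
Qed.

Lemma tstarD_le : tstar (k%:R + th) <= 1 / k%:R.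
Proof.
have kR : 1 <= k%:R :> R by rewrite ler1n.
case/andP: (thP) => th0 th1.
rewrite tstarD // ler_pdivrMr; last by apply: exprn_gt0; lra.
rewrite mulrAC ler_pdivlMr; last lra.
rewrite mul1r -subr_ge0.
have -> : (k%:R + th) ^+ 2 - (k%:R + th ^+ 2) * k%:R = th * (2 * k%:R - (k%:R - 1) * th).
  by ring.
by apply: mulr_ge0; nra.
Qed.

Lemma tstarD_lt ph : th < ph -> ph < 1 -> tstar (k%:R + ph) < tstar (k%:R + th).
Proof.
have kR : 1 <= k%:R :> R by rewrite ler1n.
case/andP: (thP) => th0 th1 thph ph1.
have phP : 0 <= ph < 1 by apply/andP; split; lra.
rewrite !tstarD // ltr_pdivrMr; last by apply: exprn_gt0; lra.
rewrite mulrAC ltr_pdivlMr; last by apply: exprn_gt0; lra.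
rewrite -subr_gt0.
have -> : (k%:R + th ^+ 2) * (k%:R + ph) ^+ 2 - (k%:R + ph ^+ 2) * (k%:R + th) ^+ 2
   = k%:R * (ph - th) * (2 * k%:R - (k%:R - 1) * (ph + th) - 2 * th * ph) by ring.
by apply: mulr_gt0; nra.
Qed.

End Block.

Lemma tstar_lt a b : 1 <= a -> a < b -> tstar b < tstar a.
Proof.
move=> a1 ab.
have tha : 0 <= frac_part a < 1 by apply: frac_part_itv; lra.
have thb : 0 <= frac_part b < 1 by apply: frac_part_itv; lra.
have ka := floor_nat_ge1 a1.
have kb : (1 <= floor_nat b)%N by apply: floor_nat_ge1; lra.
have : (floor_nat a <= floor_nat b)%N by apply: le_truncn; lra.
rewrite leq_eqVlt => /orP[/eqP kab | kab]; rewrite -(floor_add_frac a) -(floor_add_frac b).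
  rewrite -kab; apply: tstarD_lt => //; last by case/andP: thb.
  have := floor_add_frac a; have := floor_add_frac b; rewrite -kab; lra.
apply: le_lt_trans (tstarD_le kb thb) (le_lt_trans _ (tstarD_gt ka tha)).
by rewrite ler_pdivrMr ?ltr0n // mulrAC ler_pdivlMr ?ltr0n // !mul1r ler_nat.
Qed.

Lemma tstar_inj a b : 1 <= a -> 1 <= b -> tstar a = tstar b -> a = b.
Proof.
move=> a1 b1 eab; case: (ltgtP a b) => // [ab | ba].
  by have := tstar_lt a1 ab; rewrite eab ltxx.
by have := tstar_lt b1 ba; rewrite eab ltxx.
Qed.

End Tstar.

Section ThetaQuadratic.
Variable R : realType.
Implicit Types (t th : R) (k : nat).

Definition theta_quad k t th : R :=
  (t - 1) * th ^+ 2 + 2%:R * t * k%:R * th + (t * k%:R ^+ 2 - k%:R).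

Definition theta_root k t : R :=
  (t * k%:R - Num.sqrt (k%:R * (t * k.+1%:R - 1))) / (1 - t).

Lemma tstar_theta_quad k t th : (1 <= k)%N -> 0 <= th < 1 ->
  theta_quad k t th = 0 -> tstar (k%:R + th) = t.
Proof.
move=> k1 thP; have kR : 1 <= k%:R :> R by rewrite ler1n.
have -> : theta_quad k t th = t * (k%:R + th) ^+ 2 - (k%:R + th ^+ 2).
  by rewrite /theta_quad; ring.
move/eqP; rewrite subr_eq0 tstarD // => /eqP <-; rewrite mulfK //.
by case/andP: thP => th0 _; apply: expf_neq0; lra.
Qed.

Lemma theta_quad_root_uniq k t th th' : (1 <= k)%N -> 0 <= th < 1 -> 0 <= th' < 1 ->
  theta_quad k t th = 0 -> theta_quad k t th' = 0 -> th = th'.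
Proof.
move=> k1 thP thP' /(tstar_theta_quad k1 thP) e /(tstar_theta_quad k1 thP') e'.
have kR : 1 <= k%:R :> R by rewrite ler1n.
case/andP: thP => th0 _; case/andP: thP' => th0' _.
have : k%:R + th = k%:R + th' by apply: tstar_inj; rewrite ?e ?e'; lra.
by move/addrI.
Qed.

Lemma theta_rootP k t : (1 <= k)%N -> 1 / k.+1%:R < t -> t <= 1 / k%:R -> t < 1 ->
  0 <= theta_root k t < 1 /\ theta_quad k t (theta_root k t) = 0.
Proof.
move=> k1 tk1 tk t1.
rewrite ltr_pdivrMr ?ltr0n // -natr1 in tk1; rewrite ler_pdivlMr ?ltr0n // in tk.
have kR : 1 <= k%:R :> R by rewrite ler1n.
set D := k%:R * (t * (k%:R + 1) - 1).
have D0 : 0 <= D by apply: mulr_ge0; lra.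
set sq := Num.sqrt D.
have sq0 : 0 <= sq by apply: sqrtr_ge0.
have sqE : sq ^+ 2 = D by rewrite sqr_sqrtr.
have sq_le : sq <= t * k%:R.
  suff : sq ^+ 2 <= (t * k%:R) ^+ 2 by nra.
  rewrite sqE -subr_ge0.
  have -> : (t * k%:R) ^+ 2 - D = k%:R * ((1 - t) * (1 - t * k%:R)) by rewrite /D; ring.
  by apply: mulr_ge0; [lra | apply: mulr_ge0; lra].
have sq_gt : t * (k%:R + 1) - 1 < sq.
  suff : (t * (k%:R + 1) - 1) ^+ 2 < sq ^+ 2 by nra.
  rewrite sqE -subr_gt0.
  have -> : D - (t * (k%:R + 1) - 1) ^+ 2 = (t * (k%:R + 1) - 1) * ((k%:R + 1) * (1 - t)).
    by rewrite /D; ring.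
  by apply: mulr_gt0; [lra | apply: mulr_gt0; lra].
have t1' : 1 - t != 0 by rewrite subr_eq0 eq_sym lt_eqF.
rewrite /theta_root -natr1 -/D -/sq; split.
  apply/andP; split; first by apply: divr_ge0; lra.
  by rewrite ltr_pdivrMr ?mul1r; lra.
apply: (mulfI t1'); rewrite mulr0.
have -> : (1 - t) * theta_quad k t ((t * k%:R - sq) / (1 - t))
   = (t * k%:R) ^+ 2 - sq ^+ 2 + (1 - t) * (t * k%:R ^+ 2 - k%:R).
  by rewrite /theta_quad; field.
by rewrite sqE /D; ring.
Qed.

End ThetaQuadratic.

Section ChoiForm.
Variables (R : realType) (d : nat).
Local Notation C := R[i].
Implicit Types (t : R) (psi : 'I_d * 'I_d -> C).

Lemma conjC_real_complex (x : R) : (x%:C)^* = x%:C :> C.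
Proof. by apply: conj_Creal; apply/complex_realP; exists x. Qed.

Lemma choi_Phi_t t p q :
  choi (@Phi_t R d t) p q = (p == q)%:R - t%:C * ((p.2 == p.1)%:R * (q.2 == q.1)%:R).
Proof.
rewrite /choi /Phi_t /Emx !mxE /mxtrace (bigD1 p.1) //= big1 ?addr0; last first.
  by move=> i /negbTE ne; rewrite mxE ne.
case: p q => [i k] [j l] /=; rewrite !mxE eqxx xpair_eqE.
by case: (i == j); case: (k == l); case: (k == i); case: (l == j);
  rewrite /= ?(mulr1, mul1r, mulr0, mul0r).
Qed.

Lemma sum_pair (V : nmodType) (I J : finType) (F : I * J -> V) :
  \sum_p F p = \sum_i \sum_j F (i, j).
Proof. by rewrite pair_bigA; apply: eq_bigr => -[]. Qed.

Lemma sum_pair_diag (F : 'I_d * 'I_d -> C) :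
  \sum_p (p.2 == p.1)%:R * F p = \sum_i F (i, i).
Proof.
rewrite sum_pair; apply: eq_bigr => i _.
rewrite (bigD1 i) //= eqxx mul1r big1 ?addr0 // => j /negbTE ->; by rewrite mul0r.
Qed.

Lemma mxtrace_coef_mx psi : \tr (coef_mx psi) = \sum_i psi (i, i).
Proof. by apply: eq_bigr => i _; rewrite mxE. Qed.

Lemma choi_form_Phi_t t psi :
  choi_form (@Phi_t R d t) psi =
  \sum_p (psi p)^* * psi p - t%:C * `|\tr (coef_mx psi)| ^+ 2.
Proof.
rewrite /choi_form normCKC mxtrace_coef_mx.
under eq_bigr => p _ do under eq_bigr => q _ do rewrite choi_Phi_t mulrBr mulrBl.
under eq_bigr => p _ do rewrite sumrB.
rewrite sumrB; congr (_ - _).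
  apply: eq_bigr => p _; rewrite (bigD1 p) //= eqxx mulr1 big1 ?addr0 //.
  by move=> q; rewrite eq_sym => /negbTE ->; rewrite mulr0 mul0r.
rewrite rmorph_sum -(sum_pair_diag psi) -(sum_pair_diag (fun p => (psi p)^*)).
rewrite mulr_suml mulr_sumr; apply: eq_bigr => p _.
rewrite mulr_sumr mulr_sumr; apply: eq_bigr => q _.
ring.
Qed.

End ChoiForm.

Section SingularValues.
Variables (R : realType) (d : nat).
Local Notation C := R[i].
Implicit Types (A W : 'M[C]_d) (s : 'I_d -> R).

Lemma unitarymx_entry_le1 W i j : W \is unitarymx -> `|W i j| <= 1.
Proof.
move=> /unitarymxP /(congr1 (fun M : 'M[C]_d => M i i)); rewrite !mxE eqxx mulr1n => WWt.
have : W i j * (W i j)^* <= 1.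
  rewrite -WWt (bigD1 j) //= !mxE lerDl; apply: sumr_ge0 => l _.
  by rewrite !mxE mul_conjC_ge0.
by rewrite -normCK expr_le1.
Qed.

Lemma sum_sqr_singular_values A s : singular_values A s ->
  \sum_i \sum_j (A i j)^* * A i j = (\sum_j s j ^+ 2)%:C.
Proof.
move=> [_ [_ [U [V [hU [hV ->]]]]]]; set D := diag_mx _.
transitivity (\tr (U *m D *m V *m (U *m D *m V)^t*)).
  apply: eq_bigr => i _; rewrite mxE; apply: eq_bigr => j _.
  by rewrite !mxE mulrC.
rewrite !trmx_mul !map_mxM !mulmxA mulmxtVK // mxtrace_mulC !mulmxA.
rewrite -[U^t*]mul1mx mulmxKtV // mul1mx rmorph_sum; apply: eq_bigr => i _.
rewrite !mxE (bigD1 i) //= big1 ?addr0.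
  by rewrite !mxE !eqxx !mulr1n conjC_real_complex rmorphXn /= expr2.
by move=> j /negbTE ij; rewrite !mxE eq_sym ij mulr0n mul0r.
Qed.

Lemma norm_mxtrace_le_singular_values A s : singular_values A s ->
  `|\tr A| <= (\sum_j s j)%:C.
Proof.
move=> [s0 [_ [U [V [hU [hV ->]]]]]].
rewrite -mulmxA mxtrace_mulC -mulmxA.
have : V *m U \is unitarymx by apply: mul_unitarymx.
move: (V *m U) => W hW.
rewrite /mxtrace rmorph_sum; apply: le_trans (ler_norm_sum _ _ _) _.
apply: ler_sum => i _; rewrite mul_diag_mx !mxE normrM ger0_norm ?ler0c //.
by rewrite ler_piMr ?ler0c ?unitarymx_entry_le1.
Qed.

End SingularValues.

Section AdmissibleBound.
Variable R : realType.

Lemma sqr_sum_le (I : finType) (P : pred I) (x : I -> R) :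
  (\sum_(i | P i) x i) ^+ 2 <= (\sum_(i | P i) 1) * \sum_(i | P i) x i ^+ 2.
Proof.
have : 0 <= \sum_(i | P i) \sum_(j | P j) (x i - x j) ^+ 2.
  by apply: sumr_ge0 => i _; apply: sumr_ge0 => j _; apply: sqr_ge0.
have sqrB i j : (x i - x j) ^+ 2 = x i ^+ 2 * 1 + (1 * x j ^+ 2 - 2 * (x i * x j)).
  by ring.
under eq_bigr => i _ do under eq_bigr => j _ do rewrite sqrB.
under eq_bigr => i _ do rewrite big_split /= sumrB -!mulr_sumr.
rewrite big_split /= sumrB -!mulr_suml -mulr_sumr -mulr_suml.
set S1 := \sum_(i | P i) 1; set Sx := \sum_(i | P i) x i; set Sx2 := \sum_(i | P i) _.
have -> : Sx2 * S1 + (S1 * Sx2 - 2 * (Sx * Sx)) = 2 * (S1 * Sx2 - Sx ^+ 2) by ring.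
by rewrite pmulr_rge0 // subr_ge0.
Qed.

(* S and Q are the sum and the sum of squares of the k leading singular values,
   b is the next one. *)
Lemma leading_tail_estimate (k th S Q b : R) : 1 <= k -> 0 <= th < 1 -> 0 <= S -> 0 <= b ->
  k * b <= th * S -> S ^+ 2 <= k * Q ->
  (S + b) ^+ 2 * (k + th ^+ 2) <= (k + th) ^+ 2 * (Q + b ^+ 2).
Proof.
move=> k1 /andP[th0 th1] S0 b0 hb hQ.
rewrite -(ler_pM2l (_ : 0 < k)); last lra.
apply: le_trans (_ : (k + th) ^+ 2 * (S ^+ 2 + k * b ^+ 2) <= _); last first.
  have -> : k * ((k + th) ^+ 2 * (Q + b ^+ 2)) = (k + th) ^+ 2 * (k * Q + k * b ^+ 2).
    by ring.
  by apply: ler_wpM2l; [exact: sqr_ge0 | lra].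
rewrite -subr_ge0.
have -> : (k + th) ^+ 2 * (S ^+ 2 + k * b ^+ 2) - k * ((S + b) ^+ 2 * (k + th ^+ 2))
  = (k - 1 + 2 * th) * (th * S - k * b) ^+ 2
    + 2 * S * (k + th) * (1 - th) * (th * S - k * b) by ring.
apply: addr_ge0; first by apply: mulr_ge0; [lra | exact: sqr_ge0].
by apply: mulr_ge0; [apply: mulr_ge0; [apply: mulr_ge0|] | ]; lra.
Qed.

Variable d : nat.

(* [oapp F 0 (insub k)] is F at the index k, or 0 when k >= d. *)
Lemma big_ord_tail (F : 'I_d -> R) (k : nat) :
  (forall j : 'I_d, (k < j)%N -> F j = 0) ->
  \sum_j F j = \sum_(j : 'I_d | (j < k)%N) F j + oapp F 0 (insub k).
Proof.
move=> Fk; rewrite (bigID (fun j : 'I_d => (j < k)%N)) /=; congr (_ + _).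
case: (insubP 'I_d k) => [j _ jk | kd] /=.
  rewrite (bigD1 j) -?jk ?ltnn //= big1 ?addr0 // => i /andP[ik ij]; apply: Fk.
  by rewrite -jk ltn_neqAle leqNgt ik andbT; apply: contra ij => /eqP/val_inj ->.
apply: big1 => i; rewrite -leqNgt => ki.
by move: kd; rewrite (leq_ltn_trans ki (ltn_ord i)).
Qed.

Lemma sum1_ord_lt (k : nat) : (k <= d)%N -> \sum_(j < d | (j < k)%N) (1 : R) = k%:R.
Proof.
by move=> kd; rewrite -(big_ord_widen d (fun _ => (1 : R))) // sumr_const card_ord.
Qed.

Lemma sqr_sum_le_tstar (s : 'I_d -> R) (k : nat) (th : R) :
  (1 <= k <= d)%N -> 0 <= th < 1 -> (forall j, 0 <= s j) ->
  (forall j : 'I_d, (k < j)%N -> s j = 0) ->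
  (forall j : 'I_d, nat_of_ord j = k ->
     k%:R * s j <= th * \sum_(i : 'I_d | (i < k)%N) s i) ->
  (\sum_j s j) ^+ 2 * (k%:R + th ^+ 2) <= (k%:R + th) ^+ 2 * \sum_j s j ^+ 2.
Proof.
move=> /andP[k1 kd] thP s0 s_gt s_k.
have S0 : 0 <= \sum_(i : 'I_d | (i < k)%N) s i by apply: sumr_ge0.
have CS := sqr_sum_le (fun i : 'I_d => (i < k)%N) s; rewrite sum1_ord_lt // in CS.
rewrite (big_ord_tail s_gt) (@big_ord_tail (fun j => s j ^+ 2) k); last first.
  by move=> j /s_gt ->; rewrite expr0n.
have kR : 1 <= k%:R :> R by rewrite ler1n.
case: (insubP 'I_d k) => [j _ jk | _] /=.
  by apply: leading_tail_estimate; rewrite ?s_k.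
have := leading_tail_estimate kR thP S0 (lexx 0) _ CS.
rewrite mulr0 expr0n /= !addr0; apply.
by apply: mulr_ge0; case/andP: thP.
Qed.

End AdmissibleBound.

Section Sufficiency.
Variables (R : realType) (d : nat).
Local Notation C := R[i].
Implicit Types (t alpha : R) (psi : 'I_d * 'I_d -> C).

Lemma hermitian_preserving_Phi_t t : hermitian_preserving (@Phi_t R d t).
Proof.
move=> X; apply/matrixP => i j; rewrite /Phi_t !mxE /mxtrace.
rewrite rmorphB !rmorphM rmorph_sum rmorph_nat eq_sym.
congr (_ * _ - _ * _); first by apply: eq_bigr => l _; rewrite !mxE.
exact/esym/conjC_real_complex.
Qed.

Lemma unit_vector_sum_sqr psi s :
  unit_vector psi -> singular_values (coef_mx psi) s -> \sum_j s j ^+ 2 = 1.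
Proof.
move=> unit_psi /sum_sqr_singular_values.
under eq_bigr => i _ do under eq_bigr => j _ do rewrite mxE.
by rewrite -(sum_pair (fun p => (psi p)^* * psi p)) unit_psi => /complexI.
Qed.

Lemma admissible_singular_values alpha psi : 1 <= alpha ->
  admissible alpha psi ->
  exists2 s, singular_values (coef_mx psi) s &
    (forall j : 'I_d, (floor_nat alpha < j)%N -> s j = 0) /\
    (forall j : 'I_d, nat_of_ord j = floor_nat alpha ->
       (floor_nat alpha)%:R * s j
         <= frac_part alpha * \sum_(i : 'I_d | (i < floor_nat alpha)%N) s i).
Proof.
move=> a1 [_ [s [svs [s_r s_k]]]]; exists s => //.
have k0 : (floor_nat alpha)%:R != 0 :> R by rewrite pnatr_eq0 -lt0n floor_nat_ge1.
have th0 : 0 <= frac_part alpha by case/andP: (frac_part_itv (le_trans ler01 a1)).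
split=> [j kj | j jk]; first by apply: s_r; rewrite /ceil_nat; case: ifP => _ //; apply: ltnW.
have [th_gt0 | th_le0] := ltrP 0 (frac_part alpha).
  by rewrite -ler_pdivlMl ?lt0r ?k0 ?ler0n // mulrA [_^-1 * _]mulrC; apply: s_k.
rewrite s_r ?mulr0; last by rewrite /ceil_nat ltNge th_le0 jk.
by apply: mulr_ge0 => //; apply: sumr_ge0 => i _; case: svs.
Qed.

Lemma Phi_t_in_P alpha t : 1 <= alpha <= d%:R -> t <= tstar alpha ->
  in_P alpha (@Phi_t R d t).
Proof.
move=> /andP[a1 ad] t_le; split=> [|psi adm]; first exact: hermitian_preserving_Phi_t.
have [s svs [s_gt s_k]] := admissible_singular_values a1 adm.
have s0 : forall j, 0 <= s j by case: svs.
have thP : 0 <= frac_part alpha < 1 by apply: frac_part_itv; lra.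
have kR : 1 <= (floor_nat alpha)%:R :> R by rewrite ler1n floor_nat_ge1.
have sum_s_bound : tstar alpha * (\sum_j s j) ^+ 2 <= 1.
  rewrite -(unit_vector_sum_sqr adm.1 svs) /tstar mulrAC ler_pdivrMr; last first.
    by apply: exprn_gt0; case/andP: thP; lra.
  rewrite mulrC [X in _ <= X]mulrC; apply: sqr_sum_le_tstar => //.
  by rewrite floor_nat_ge1 ?floor_nat_le.
have tr_le := norm_mxtrace_le_singular_values svs.
rewrite choi_form_Phi_t adm.1 subr_ge0.
have [t_le0 | t_gt0] := lerP t 0.
  apply: le_trans (_ : 0 <= 1); last exact: ler01.
  by apply: mulr_le0_ge0; rewrite ?exprn_ge0 // -[0 : C]/((0 : R)%:C) lecR.
apply: le_trans (_ : (t * (\sum_j s j) ^+ 2)%:C <= (1 : R)%:C); last first.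
  by rewrite lecR; apply: le_trans sum_s_bound; rewrite ler_wpM2r ?sqr_ge0.
rewrite rmorphM rmorphXn /=; apply: ler_wpM2l; first by rewrite ler0c ltW.
by rewrite lerXn2r // nnegrE // ler0c sumr_ge0.
Qed.

End Sufficiency.

Section Necessity.
Variables (R : realType) (d : nat).
Local Notation C := R[i].
Implicit Types (t th : R) (k : nat) (c : 'I_d -> R).

Definition diag_vector c (p : 'I_d * 'I_d) : C :=
  if p.1 == p.2 then (c p.1)%:C else 0.

Lemma coef_mx_diag_vector c : coef_mx (diag_vector c) = diag_mx (\row_j (c j)%:C).
Proof.
apply/matrixP => i j; rewrite !mxE /diag_vector /=.
by case: eqP => [->|_]; rewrite ?mulr1n ?mulr0n.
Qed.

Lemma singular_values_diag c : (forall j, 0 <= c j) ->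
  (forall i j : 'I_d, (i <= j)%N -> c j <= c i) ->
  singular_values (diag_mx (\row_j (c j)%:C)) c.
Proof.
move=> c0 c_nonincr; do 2!split => //.
have id_unitary : (1%:M : 'M[C]_d) \is unitarymx.
  by apply/unitarymxP; rewrite trmx1 map_mx1 mulmx1.
by exists 1%:M, 1%:M; rewrite mul1mx mulmx1.
Qed.

Lemma diag_vector_sum_sqr c :
  \sum_p (diag_vector c p)^* * diag_vector c p = (\sum_j c j ^+ 2)%:C.
Proof.
rewrite sum_pair rmorph_sum; apply: eq_bigr => i _.
rewrite (bigD1 i) //= big1 ?addr0.
  by rewrite /diag_vector /= eqxx conjC_real_complex -rmorphM expr2.
by move=> j; rewrite /diag_vector /= eq_sym => /negbTE ->; rewrite mulr0.
Qed.

Lemma mxtrace_diag_vector c : \tr (coef_mx (diag_vector c)) = (\sum_j c j)%:C.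
Proof.
by rewrite mxtrace_coef_mx rmorph_sum; apply: eq_bigr => i _; rewrite /diag_vector /= eqxx.
Qed.

(* Up to normalisation, the Schmidt coefficients (1, ..., 1, theta, 0, ..., 0)
   with k ones, for which sqr_sum_le_tstar is an equality. *)
Definition extremal_weight k th (j : 'I_d) : R :=
  if (j < k)%N then 1 else if nat_of_ord j == k then th else 0.

Lemma extremal_weight_ge0 k th j : 0 <= th -> 0 <= extremal_weight k th j.
Proof. by move=> th0; rewrite /extremal_weight; case: ifP => // _; case: ifP. Qed.

Lemma extremal_weight_nonincr k th (i j : 'I_d) : 0 <= th <= 1 -> (i <= j)%N ->
  extremal_weight k th j <= extremal_weight k th i.
Proof.
move=> /andP[th0 th1] ij; rewrite /extremal_weight.
case: (ltnP j k) => jk; first by rewrite (leq_ltn_trans ij jk).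
case: (ltnP i k) => ik; first by case: eqP.
have [_ | nei] := eqVneq (nat_of_ord i) k; first by case: eqP.
by move/eqP: nei => nei; rewrite (_ : (nat_of_ord j == k) = false) //; apply/negbTE/eqP; lia.
Qed.

Lemma sum_extremal_weight (F : R -> R) k th : (k <= d)%N -> 0 <= th ->
  k%:R + th <= d%:R -> F 0 = 0 ->
  \sum_j F (extremal_weight k th j) = k%:R * F 1 + F th.
Proof.
move=> kd th0 kth F0.
rewrite (@big_ord_tail _ _ (fun j => F (extremal_weight k th j)) k); last first.
  by move=> j kj; rewrite /extremal_weight ltnNge (ltnW kj) gtn_eqF.
congr (_ + _).
  rewrite -(sum1_ord_lt R kd) mulr_suml; apply: eq_bigr => j jk.
  by rewrite /extremal_weight jk mul1r.
case: (insubP 'I_d k) => [j _ jk | dk] /=; first by rewrite /extremal_weight jk ltnn eqxx.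
have dk' : d%:R <= k%:R :> R by rewrite ler_nat leqNgt.
by rewrite (_ : th = 0) //; lra.
Qed.

Definition extremal_vector k th : 'I_d * 'I_d -> C :=
  diag_vector (fun j => extremal_weight k th j / Num.sqrt (k%:R + th ^+ 2)).

Section ExtremalVector.
Variables (k : nat) (th : R).
Hypotheses (k1 : (1 <= k)%N) (thP : 0 <= th < 1) (kth_d : k%:R + th <= d%:R).

Let sq := Num.sqrt (k%:R + th ^+ 2).

Let k_le_d : (k <= d)%N.
Proof. by rewrite -(ler_nat R); apply: le_trans kth_d; rewrite lerDl; case/andP: thP. Qed.

Let kth2_gt0 : 0 < k%:R + th ^+ 2.
Proof.
have kR : 1 <= k%:R :> R by rewrite ler1n.
by have := sqr_ge0 th; lra.
Qed.

Let sq_gt0 : 0 < sq. Proof. by rewrite sqrtr_gt0 kth2_gt0. Qed.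

Let sum_sqr_extremal : \sum_j (extremal_weight k th j / sq) ^+ 2 = 1.
Proof.
case/andP: thP => th0 _.
rewrite (@sum_extremal_weight (fun x => (x / sq) ^+ 2) k th k_le_d th0 kth_d); last first.
  by rewrite mul0r expr0n.
rewrite !expr_div_n expr1n sqr_sqrtr ?ltW //.
by field; rewrite lt0r_neq0.
Qed.

Lemma extremal_vector_admissible : admissible (k%:R + th) (extremal_vector k th).
Proof.
case/andP: (thP) => th0 th1.
rewrite /admissible /ceil_nat floor_natD // frac_partD //; split.
  by rewrite /unit_vector diag_vector_sum_sqr -/sq sum_sqr_extremal.
exists (fun j => extremal_weight k th j / sq); split.
  rewrite coef_mx_diag_vector; apply: singular_values_diag => [j | i j ij].
    by rewrite divr_ge0 ?extremal_weight_ge0 ?sqrtr_ge0.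
  by rewrite ler_pM2r ?invr_gt0 // extremal_weight_nonincr ?th0 ?ltW.
split=> [j | th_gt0 j jk].
  rewrite /extremal_weight; case: ifP => [_ kj | th_le0 kj].
    by rewrite ltnNge ltnW // gtn_eqF // mul0r.
  rewrite ltnNge kj /=; case: eqP => _; last by rewrite mul0r.
  by rewrite (_ : th = 0) ?mul0r //; apply/eqP; rewrite eq_le th0 andbT leNgt th_le0.
rewrite /extremal_weight jk ltnn eqxx.
rewrite (eq_bigr (fun _ => 1 / sq)) => [|i ik]; last by rewrite /extremal_weight ik.
rewrite -mulr_suml sum1_ord_lt // mulrA divfK //.
by rewrite pnatr_eq0 -lt0n.
Qed.

Lemma choi_form_extremal_vector t :
  choi_form (@Phi_t R d t) (extremal_vector k th) = (1 - t / tstar (k%:R + th))%:C.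
Proof.
case/andP: (thP) => th0 th1.
have kR : 1 <= k%:R :> R by rewrite ler1n.
have sum_extremal : \sum_j extremal_weight k th j / sq = (k%:R + th) / sq.
  rewrite (@sum_extremal_weight (fun x => x / sq) k th k_le_d th0 kth_d) ?mul0r //.
  by rewrite mulrA mulr1 mulrDl.
rewrite choi_form_Phi_t diag_vector_sum_sqr mxtrace_diag_vector -/sq.
rewrite sum_sqr_extremal sum_extremal ger0_norm ?ler0c ?divr_ge0 ?ltW //; last lra.
rewrite rmorphB rmorph1 -rmorphXn -rmorphM; congr (_ - _%:C).
rewrite tstarD // expr_div_n sqr_sqrtr ?ltW //.
by field; rewrite !lt0r_neq0 ?kth2_gt0 //; lra.
Qed.

End ExtremalVector.

Lemma in_P_Phi_tE alpha t : 1 <= alpha <= d%:R ->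
  in_P alpha (@Phi_t R d t) <-> t <= tstar alpha.
Proof.
move=> alphaP; split=> [[_ P_psi] | ]; last exact: Phi_t_in_P.
case/andP: alphaP => a1 ad.
have thP : 0 <= frac_part alpha < 1 by apply: frac_part_itv; lra.
have k1 := floor_nat_ge1 a1.
have tstar_gt0 : 0 < tstar alpha.
  rewrite -(floor_add_frac alpha); apply: lt_trans (tstarD_gt k1 thP).
  by rewrite divr_gt0 ?ltr0n.
rewrite -(floor_add_frac alpha) in ad P_psi.
have := P_psi _ (extremal_vector_admissible k1 thP ad).
by rewrite choi_form_extremal_vector // floor_add_frac ler0c subr_ge0 ler_pdivrMr ?mul1r.
Qed.

End Necessity.

Section CompletePositivity.
Variables (R : realType) (d n : nat).
Local Notation C := R[i].
Variable X : 'I_n -> 'I_n -> 'M[C]_d.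
Implicit Types (c : 'M[C]_(n, d)).

(* A vector of C^n (x) C^d is stored as an n x d matrix whose p-th row is its
   p-th block. *)
Definition block_form c c' : C :=
  \sum_p \sum_q \sum_a \sum_b (c p a)^* * X p q a b * c' q b.

Lemma block_formB c c' :
  block_form (c - c') (c - c') =
  block_form c c - block_form c c' - block_form c' c + block_form c' c'.
Proof.
rewrite /block_form -!sumrB -!big_split /=; apply: eq_bigr => p _.
rewrite -!sumrB -!big_split /=; apply: eq_bigr => q _.
rewrite -!sumrB -!big_split /=; apply: eq_bigr => a _.
rewrite -!sumrB -!big_split /=; apply: eq_bigr => b _.
rewrite !mxE rmorphB /=; ring.
Qed.

Lemma block_formE (F : 'M[C]_d -> 'M[C]_d) c :
  \sum_p \sum_q (((row p c)^T)^t* *m F (X p q) *m (row q c)^T) 0 0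
  = \sum_p \sum_q \sum_a \sum_b (c p a)^* * F (X p q) a b * c q b.
Proof.
apply: eq_bigr => p _; apply: eq_bigr => q _; rewrite mxE exchange_big /=.
apply: eq_bigr => b _; rewrite !mxE mulr_suml; apply: eq_bigr => a _.
by rewrite !mxE.
Qed.

Lemma block_form_ge0 c : psd_block X -> 0 <= block_form c c.
Proof. by move=> /(_ (fun p => (row p c)^T)); rewrite (block_formE id). Qed.

(* The slices [slice c l l] add up to c, and the forms of all the slices add up
   to the form of (id (x) Tr)(X) (x) I at c. *)
Definition slice c (l m : 'I_d) : 'M[C]_(n, d) := \matrix_(p, a) ((a == m)%:R * c p l).

Lemma block_form_slice c l m l' m' :
  block_form (slice c l m) (slice c l' m') = \sum_p \sum_q (c p l)^* * X p q m m' * c q l'.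
Proof.
apply: eq_bigr => p _; apply: eq_bigr => q _.
rewrite (bigD1 m) //= addrC big1 ?add0r => [|a /negbTE am]; last first.
  by apply: big1 => b _; rewrite !mxE am mul0r rmorph0 !mul0r.
rewrite (bigD1 m') //= addrC big1 ?add0r => [|b /negbTE bm]; last first.
  by rewrite !mxE bm mul0r mulr0.
by rewrite !mxE !eqxx !mul1r.
Qed.

Lemma exchange_big_pairs (F : 'I_d -> 'I_d -> 'I_n -> 'I_n -> C) :
  \sum_l \sum_m \sum_p \sum_q F l m p q = \sum_p \sum_q \sum_l \sum_m F l m p q.
Proof.
under eq_bigr => l _ do rewrite exchange_big.
under eq_bigr => l _ do under eq_bigr => p _ do rewrite exchange_big.
by rewrite exchange_big; apply: eq_bigr => p _; rewrite exchange_big.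
Qed.

Lemma sum_block_form_diag_slices c :
  \sum_l \sum_l' block_form (slice c l l) (slice c l' l') = block_form c c.
Proof.
under eq_bigr => l _ do under eq_bigr => l' _ do rewrite block_form_slice.
by rewrite exchange_big_pairs.
Qed.

Lemma block_form_le_diag_slices c : psd_block X ->
  block_form c c <= d%:R * \sum_l block_form (slice c l l) (slice c l l).
Proof.
move=> psdX.
(* With w_l := slice c l l, sum_{l,l'} H(w_l - w_l') = 2 (d sum_l H(w_l) - H(c)). *)
have : 0 <= \sum_l \sum_l' block_form (slice c l l - slice c l' l') (slice c l l - slice c l' l').
  by apply: sumr_ge0 => l _; apply: sumr_ge0 => l' _; apply: block_form_ge0.
under eq_bigr => l _ do under eq_bigr => l' _ do rewrite block_formB.
under eq_bigr => l _ do rewrite big_split /= !sumrB sumr_const card_ord.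
rewrite big_split /= !sumrB sum_block_form_diag_slices [X in _ - X + _]exchange_big /=.
rewrite sum_block_form_diag_slices.
rewrite sumr_const card_ord sumrMnl mulr_natl.
set S := _ *+ d; set H := block_form c c.
have -> : S - H - H + S = 2 * (S - H) by ring.
by rewrite pmulr_rge0 ?ltr0n // subr_ge0.
Qed.

Lemma sum_diag_slices_le c : psd_block X ->
  \sum_l block_form (slice c l l) (slice c l l)
  <= \sum_l \sum_m block_form (slice c l m) (slice c l m).
Proof.
move=> psdX; apply: ler_sum => l _; rewrite (bigD1 l) //= lerDl.
by apply: sumr_ge0 => m _; apply: block_form_ge0.
Qed.

Lemma block_form_Phi_t t c :
  \sum_p \sum_q (((row p c)^T)^t* *m @Phi_t R d t (X p q) *m (row q c)^T) 0 0
  = \sum_l \sum_m block_form (slice c l m) (slice c l m) - t%:C * block_form c c.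
Proof.
have -> : \sum_l \sum_m block_form (slice c l m) (slice c l m)
    = \sum_p \sum_q \sum_l \sum_m (c p l)^* * X p q m m * c q l.
  under eq_bigr => l _ do under eq_bigr => m _ do rewrite block_form_slice.
  by rewrite exchange_big_pairs.
rewrite block_formE /block_form mulr_sumr -sumrB; apply: eq_bigr => p _.
rewrite mulr_sumr -sumrB; apply: eq_bigr => q _.
under eq_bigr => a _ do under eq_bigr => b _ do rewrite !mxE mulrBr mulrBl.
under eq_bigr => a _ do rewrite sumrB.
rewrite sumrB mulr_sumr; congr (_ - _).
  apply: eq_bigr => a _; rewrite (bigD1 a) //= big1 ?addr0.
    rewrite eqxx mulr1 /mxtrace mulr_sumr mulr_suml; apply: eq_bigr => m _; ring.
  by move=> b; rewrite eq_sym => /negbTE ->; rewrite mulr0 mulr0 mul0r.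
by apply: eq_bigr => a _; rewrite mulr_sumr; apply: eq_bigr => b _; ring.
Qed.

End CompletePositivity.

Lemma Phi_t_completely_positive (R : realType) (d : nat) (t : R) :
  t * d%:R <= 1 -> completely_positive (@Phi_t R d t).
Proof.
move=> td n X psdX u; pose c := \matrix_(p, a) u p a 0.
have uE p : u p = (row p c)^T by apply/matrixP => a b; rewrite !mxE ord1.
under eq_bigr => p _ do under eq_bigr => q _ do rewrite !uE.
rewrite block_form_Phi_t subr_ge0.
have H_le := block_form_le_diag_slices c psdX.
have G_le := sum_diag_slices_le c psdX.
have G0 : 0 <= \sum_l block_form X (slice c l l) (slice c l l).
  by apply: sumr_ge0 => l _; apply: block_form_ge0.
have [t_le0 | t_gt0] := lerP t 0.
  apply: le_trans (le_trans G0 G_le); apply: mulr_le0_ge0; last exact: block_form_ge0.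
  by rewrite -[0 : R[i]]/((0 : R)%:C) lecR.
apply: le_trans G_le; apply: le_trans (ler_wpM2l _ H_le) _; first by rewrite ler0c ltW.
rewrite mulrA -[X in _ <= X]mul1r ler_wpM2r //.
by rewrite -(rmorph_nat (real_complex R)) -rmorphM -[1 : R[i]]/((1 : R)%:C) lecR.
Qed.

Section StabilityIndex.
Variables (R : realType) (d : nat).
Implicit Types (t m alpha : R).
Local Open Scope classical_set_scope.

Lemma tau_Phi_t_max t m : 1 <= m <= d%:R -> t <= tstar m ->
  (forall alpha, 1 <= alpha <= d%:R -> t <= tstar alpha -> alpha <= m) ->
  tau (@Phi_t R d t) = m.
Proof.
move=> mP tm m_max; rewrite /tau.
set E := [set alpha | _].
have Em : E m by split=> //; apply/in_P_Phi_tE.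
have ubE : ubound E m by move=> a [aP /(in_P_Phi_tE _ aP)]; apply: m_max.
apply/le_anti/andP; split; first by apply: ge_sup => //; exists m.
by apply: ub_le_sup => //; exists m.
Qed.

Lemma tau_Phi_t_tstar t m : 1 <= m <= d%:R -> tstar m = t -> tau (@Phi_t R d t) = m.
Proof.
move=> mP <-; case/andP: (mP) => m1 _.
apply: tau_Phi_t_max => // alpha _ t_le.
rewrite leNgt; apply/negP => m_lt.
by have := tstar_lt m1 m_lt; rewrite ltNge t_le.
Qed.

Lemma tau_Phi_t_small t : (1 <= d)%N -> t <= 1 / d%:R -> tau (@Phi_t R d t) = d%:R.
Proof.
move=> d1 td; have dR : 1 <= d%:R :> R by rewrite ler1n.
by apply: tau_Phi_t_max; rewrite ?tstar_nat ?lexx ?dR // => alpha /andP[].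
Qed.

End StabilityIndex.

Lemma floor_inv_bounds (R : realType) (d : nat) (t : R) : (1 <= d)%N ->
  1 / d%:R < t -> t < 1 ->
  let k := floor_nat (1 / t) in
  (1 <= k <= d.-1)%N /\ 1 / k.+1%:R < t /\ t <= 1 / k%:R.
Proof.
move=> d1 dt t1 k; have t0 : 0 < t by apply: lt_trans dt; rewrite divr_gt0 ?ltr0n.
have /andP[k_le k_gt] : k%:R <= 1 / t < k.+1%:R by apply: truncn_itv; rewrite divr_ge0 ?ltW.
have k1 : (1 <= k)%N by rewrite /k /floor_nat truncn_gt0 ler_pdivlMr // mul1r ltW.
have kd : (k <= d.-1)%N.
  by rewrite /k /floor_nat truncn_le_nat prednK // ltr_pdivrMr // mulrC -ltr_pdivrMr ?ltr0n.
rewrite k1 kd; split=> //; split.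
  by rewrite ltr_pdivrMr ?ltr0n //; rewrite ltr_pdivrMr // mulrC in k_gt.
by rewrite ler_pdivlMr ?ltr0n //; rewrite ler_pdivlMr // mulrC in k_le.
Qed.

Lemma tau_Phi_t_block (R : realType) (d k : nat) (t : R) : (1 <= k <= d.-1)%N ->
  1 / k.+1%:R < t -> t <= 1 / k%:R -> t < 1 ->
  exists theta : R,
    (0 <= theta < 1) /\ theta_quad k t theta = 0 /\
    (forall theta', 0 <= theta' < 1 -> theta_quad k t theta' = 0 -> theta' = theta) /\
    tau (@Phi_t R d t) = k%:R + theta /\
    (t < 1 / k%:R -> theta = theta_root k t) /\
    (t = 1 / k%:R -> theta = 0 /\ tau (@Phi_t R d t) = k%:R).
Proof.
move=> /andP[k1 kd] tk1 tk t1.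
have [thP root] := theta_rootP k1 tk1 tk t1.
have root_uniq := theta_quad_root_uniq k1 thP.
have tau_th : tau (@Phi_t R d t) = k%:R + theta_root k t.
  apply: tau_Phi_t_tstar; last exact: tstar_theta_quad.
  have kR : 1 <= k%:R :> R by rewrite ler1n.
  have kd1 : k%:R + 1 <= d%:R :> R by rewrite natr1 ler_nat; lia.
  by case/andP: thP => th0 th1; apply/andP; split; lra.
exists (theta_root k t); do 2!split=> //; split.
  by move=> th' th'P root'; rewrite (root_uniq _ _ th'P root root').
do 2!split=> //; move=> tk_eq.
suff th0 : theta_root k t = 0 by rewrite tau_th th0 addr0.
apply: (root_uniq _ _ _ root); rewrite ?lexx ?ltr01 // /theta_quad tk_eq.
by field; rewrite pnatr_eq0 -lt0n.
Qed.

Theorem corollary4p9 (R : realType) (d : nat) : (2 <= d)%N ->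
  (* (i) *)
  (forall t : R, t <= 0 ->
     completely_positive (@Phi_t R d t) /\ tau (@Phi_t R d t) = d%:R) /\
  (* (ii) *)
  (forall t : R, 0 < t -> t <= 1 / d%:R ->
     completely_positive (@Phi_t R d t) /\ tau (@Phi_t R d t) = d%:R) /\
  (* (iii) *)
  (forall t : R, 1 / d%:R < t -> t < 1 ->
     (exists alpha : R,
        [/\ 1 < alpha < d%:R, t = tstar alpha,
            (forall beta : R, 1 < beta < d%:R -> t = tstar beta -> beta = alpha)
          & tau (@Phi_t R d t) = alpha]) /\
     (forall k : nat, (1 <= k <= d.-1)%N ->
        1 / k.+1%:R < t -> t <= 1 / k%:R ->
        exists theta : R,
          (0 <= theta < 1) /\
              (t - 1) * theta ^+ 2 + 2%:R * t * k%:R * theta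
                + (t * k%:R ^+ 2 - k%:R) = 0 /\
              (forall theta' : R, 0 <= theta' < 1 ->
                 (t - 1) * theta' ^+ 2 + 2%:R * t * k%:R * theta'
                   + (t * k%:R ^+ 2 - k%:R) = 0 -> theta' = theta) /\
              tau (@Phi_t R d t) = k%:R + theta /\
              (t < 1 / k%:R ->
                 theta = (t * k%:R - Num.sqrt (k%:R * (t * k.+1%:R - 1))) / (1 - t)) /\
              (t = 1 / k%:R -> theta = 0 /\ tau (@Phi_t R d t) = k%:R))) /\
  (* (iv) *)
  tau (@Phi_t R d 1) = 1.
Proof.
move=> d2; have d1 : (1 <= d)%N by apply: ltnW.
have small t : t <= 1 / d%:R ->
    completely_positive (@Phi_t R d t) /\ tau (@Phi_t R d t) = d%:R.
  move=> td; split; last exact: tau_Phi_t_small.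
  by apply: Phi_t_completely_positive; rewrite -ler_pdivlMr ?ltr0n.
split; first by move=> t t0; apply: small; apply: le_trans t0 _; rewrite divr_ge0.
split; first by move=> t _; apply: small.
split; last by apply: tau_Phi_t_tstar; rewrite ?tstar1 // lexx ler1n.
move=> t dt t1; split=> [|k kP tk1 tk]; last exact: tau_Phi_t_block.
have [kP [tk1 tk]] := floor_inv_bounds d1 dt t1.
set k := floor_nat (1 / t) in kP tk1 tk.
have [th [thP [root_th [_ [tau_th _]]]]] := tau_Phi_t_block kP tk1 tk t1.
have k1 : (1 <= k)%N by case/andP: kP.
have tstar_th := tstar_theta_quad k1 thP root_th.
have kR : 1 <= k%:R :> R by rewrite ler1n.
have kd : k%:R + 1 <= d%:R :> R by rewrite natr1 ler_nat; case/andP: kP => _; lia.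
have alpha_ne1 : k%:R + th != 1.
  by apply: contraTneq t1 => kth1; rewrite -tstar_th kth1 tstar1 ltxx.
case/andP: thP => th0 th1.
exists (k%:R + th); split=> //.
- by rewrite lt_neqAle eq_sym alpha_ne1 /=; apply/andP; split; lra.
- move=> beta /andP[b1 _] t_beta; apply: tstar_inj; rewrite -?t_beta //; lra.
Qed.
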